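(* Let $X$ be a shift space, $k\in\mathbb{N}$, and $\mathcal{C}=(C_n)_{n\in\mathbb{N}}$ with $C_n\subseteq\mathcal{L}(X,[1,nk]^d)$ a collection with entropy $h(\mathcal{C})>0$. Let $r\in\mathbb{N}$. Then there is a collection $\mathcal{C}'=(C_n')_{n\in\mathbb{N}}$ with $C_n'\subseteq C_n$ such that $h(\mathcal{C}')=h(\mathcal{C})$ and for all $n$, all $a\in C_n'$ and all $\gamma\in[-r,r]^d\setminus\{\bar 0\}$, $a$ clashes with $\sigma^\gamma(a)$.
   Context: $X\subseteq\mathcal{A}^{\mathbb{Z}^d}$ is closed and shift-invariant ($\mathcal{A}$ finite); $\mathcal{L}(X,B)=\{x|_B:x\in X\}$. For a pattern $a$ on $B$, $\sigma^\gamma(a)$ is the pattern on $B-\gamma$ given by $(\sigma^\gamma a)_\delta=a_{\gamma+\delta}$. Patterns $a,b$ clash if some site $\gamma$ in both domains has $a_\gamma\ne b_\gamma$. The entropy of $\mathcal{C}=(C_n)$ is $h(\mathcal{C})=\liminf_{n\to\infty}(nk)^{-d}\log|C_n|$. *)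

From mathcomp Require Import all_boot all_order all_algebra.
From mathcomp Require Import all_classical all_reals all_analysis.
Set Implicit Arguments. Unset Strict Implicit. Unset Printing Implicit Defensive.
Import Order.TTheory GRing.Theory Num.Theory.
Local Open Scope ring_scope.

Section Shifts.
Variables (d : nat) (A : finType).

Definition site := 'rV[int]_d.
Definition config := site -> A.
(* a pattern with arbitrary domain: the domain is {g | a g <> None} *)
Definition pattern := site -> option A.

Definition shift_config (g : site) (x : config) : config := fun delta => x (g + delta).

Definition shift_pat (g : site) (a : pattern) : pattern := fun delta => a (g + delta).

Definition clash (a b : pattern) : Prop :=
  exists delta u v, a delta = Some u /\ b delta = Some v /\ u <> v.

(* X closed in the product topology (A discrete) *)
Definition closed_config_set (X : config -> Prop) : Prop :=
  forall x : config,
    (forall N : nat, exists y, X y /\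
        forall delta : site, (forall i, `|delta 0 i| <= N%:Z) -> y delta = x delta) ->
    X x.

Definition shift_space (X : config -> Prop) : Prop :=
  closed_config_set X /\ forall (g : site) x, X x -> X (shift_config g x).

(* the box [1,m]^d, indexed by b : 'I_d -> 'I_m, b i representing b i + 1 *)
Definition box (m : nat) := {ffun 'I_d -> 'I_m}.
Definition box_site m (b : box m) : site := \row_i ((b i).+1 : nat)%:Z.

Definition box_pat (m : nat) := {ffun box m -> A}.

Definition ext m (a : box_pat m) : pattern :=
  fun delta => match [pick b : box m | box_site b == delta] with
               | Some b => Some (a b) | None => None end.

Definition in_lang (X : config -> Prop) m (a : box_pat m) : Prop :=
  exists x, X x /\ forall b : box m, a b = x (box_site b).

Definition entropy (R : realType) (k : nat) (C : forall n : nat, {set box_pat (n * k)}) : R :=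
  limn_inf (fun n : nat => ln (#|C n|%:R : R) / (((n * k) ^ d)%N%:R)).

End Shifts.

(* A pattern on [[1,m]^d] that fails to clash with its shift by some nonzero
   [g] in [[-r,r]^d] is [g]-periodic, and a [g]-periodic pattern is determined
   by [g] and its restriction to the boundary layer of width [r], which has
   [O(m^(d-1))] sites.  So there are only [exp(O(m^(d-1)))] such patterns,
   while positive entropy gives [|C_n| >= exp(c (nk)^d)]; discarding them at
   most halves [C_n] for large [n], which moves [(nk)^-d log |C_n|] by at most
   [log 2 / (nk)^d]. *)

From mathcomp Require Import all_boot all_order all_algebra.
From mathcomp Require Import all_classical all_reals all_analysis.
From mathcomp Require Import zify ring.
Import Order.TTheory GRing.Theory Num.Theory.
Local Open Scope ring_scope.

Lemma expnS_le_add (s t m n : nat) : (s <= m <= s + t)%N ->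
  (m ^ n.+1 <= s ^ n.+1 + n.+1 * t * m ^ n)%N.
Proof.
case/andP=> sm mst; elim: n => [|n IH]; first by rewrite expn1 expn0; lia.
have smX : (s ^ n.+1 <= m ^ n.+1)%N by rewrite leq_exp2r.
have IHm := leq_mul (leqnn m) IH.
have msX := leq_mul mst (leqnn (s ^ n.+1)).
have tsX := leq_mul (leqnn t) smX.
rewrite [(m ^ n.+2)%N]expnS [(s ^ n.+2)%N]expnS [(m ^ n.+1)%N]expnS.
rewrite [(m ^ n.+1)%N]expnS in IHm tsX smX.
move: IHm msX tsX smX; move: (m ^ n)%N (s ^ n.+1)%N => M S; nia.
Qed.

Section Periods.
Local Set Implicit Arguments. Local Unset Strict Implicit.
Variables (d : nat) (A : finType) (m r : nat).

Lemma box_site_inj : injective (@box_site d m).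
Proof.
move=> b b' /matrixP e; apply/ffunP => i; apply/val_inj.
by have := e 0 i; rewrite !mxE; case.
Qed.

Lemma ext_box_site (a : box_pat d A m) (b : box d m) : ext a (box_site b) = Some (a b).
Proof.
rewrite /ext; case: pickP => [b' /eqP /box_site_inj -> //|].
by move/(_ b); rewrite eqxx.
Qed.

Definition periodic (g : site d) (a : box_pat d A m) : bool :=
  [forall b1, forall b2, (box_site b2 == g + box_site b1) ==> (a b1 == a b2)].

Lemma periodicP (g : site d) (a : box_pat d A m) (b1 b2 : box d m) :
  periodic g a -> box_site b2 = g + box_site b1 -> a b1 = a b2.
Proof. by move=> /forallP/(_ b1)/forallP/(_ b2)/implyP pa /eqP/pa/eqP. Qed.

Lemma clash_of_not_periodic (a : box_pat d A m) (g : site d) :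
  ~~ periodic g a -> clash (ext a) (shift_pat g (ext a)).
Proof.
rewrite negb_forall => /existsP [b1]; rewrite negb_forall => /existsP [b2].
rewrite negb_imply => /andP [/eqP e /eqP ne].
exists (box_site b1), (a b1), (a b2); split; first exact: ext_box_site.
by rewrite /shift_pat -e ext_box_site.
Qed.

Definition offset (t : {ffun 'I_d -> 'I_(2 * r).+1}) : site d :=
  \row_i ((t i)%:Z - r%:Z).

Lemma offset_onto (g : site d) : (forall i, `|g 0 i| <= r%:Z) ->
  exists t, offset t = g.
Proof.
move=> gr; have gr' (i : 'I_d) : - r%:Z <= g 0 i <= r%:Z by rewrite -ler_norml.
have lt (i : 'I_d) : (absz (g 0 i + r%:Z)%R < (2 * r).+1)%N by have := gr' i; lia.
exists [ffun i => Ordinal (lt i)]; apply/matrixP => i j.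
rewrite (ord1 i) !mxE ffunE /=; have := gr' j; lia.
Qed.

Lemma offset_neq0 t : offset t != 0 -> [exists i, (t i : nat) != r].
Proof.
apply: contraNT; rewrite negb_exists => /forallP t_r; apply/eqP/matrixP => i j.
by rewrite !mxE; move/negbNE/eqP: (t_r j) => ->; rewrite subrr.
Qed.

Definition has_small_period (a : box_pat d A m) : bool :=
  [exists t, (offset t != 0) && periodic (offset t) a].

Lemma inner_lt (c : {ffun 'I_d -> 'I_(m - 2 * r)}) i : (c i + r < m)%N.
Proof. have := ltn_ord (c i); lia. Qed.

Definition inner (c : {ffun 'I_d -> 'I_(m - 2 * r)}) : box d m :=
  [ffun i => Ordinal (inner_lt c i)].

Lemma inner_inj : injective inner.
Proof.
move=> c c' /ffunP e; apply/ffunP => i; apply/val_inj.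
by have := congr1 val (e i); rewrite !ffunE /=; lia.
Qed.

Definition boundary_layer : {set box d m} := ~: [set inner c | c in predT].

Lemma card_boundary_layer : (#|boundary_layer| + (m - 2 * r) ^ d = m ^ d)%N.
Proof.
have := cardsC [set inner c | c in predT].
rewrite card_imset; last exact: inner_inj.
by rewrite !card_ffun !card_ord addnC.
Qed.

(* Stepping back by the period from an inner site stays in the box and strictly
   decreases [mu], so induction on [mu] reduces every site to the layer. *)
Lemma periodic_eq_on_layer t (a a' : box_pat d A m) : offset t != 0 ->
  periodic (offset t) a -> periodic (offset t) a' ->
  {in boundary_layer, a =1 a'} -> a = a'.
Proof.
move=> /offset_neq0 /existsP [i0 ti0] pa pa' eq_layer.
pose mu (b : box d m) := if (r < t i0)%N then nat_of_ord (b i0) else (m - b i0)%N.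
suff mu_eq n b : mu b = n -> a b = a' b by apply/ffunP => b; exact: mu_eq _ b erefl.
elim/ltn_ind: n b => n IH b0 mu_b.
case: (boolP (b0 \in boundary_layer)) => [/eq_layer //|].
rewrite inE negbK => /imsetP [c _ b0E]; subst b0.
have lt i : ((c i + r) + r - t i < m)%N.
  by have := ltn_ord (c i); have := ltn_ord (t i); lia.
pose b : box d m := [ffun i => Ordinal (lt i)].
have step : box_site (inner c) = offset t + box_site b.
  apply/matrixP => i j; rewrite (ord1 i) !mxE !ffunE /=.
  by have := ltn_ord (t j); lia.
rewrite -(periodicP pa step) -(periodicP pa' step); apply: IH _ _ erefl.
move: ti0; rewrite -mu_b /mu !ffunE /=.
move/eqP; have := ltn_ord (c i0); have := ltn_ord (t i0).
move: (nat_of_ord (t i0)) (nat_of_ord (c i0)) => ti ci.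
by case: (ltnP r ti); lia.
Qed.

Lemma card_has_small_period :
  (#|[set a | has_small_period a]| <= (2 * r).+1 ^ d * #|A| ^ #|boundary_layer|)%N.
Proof.
pose t0 : {ffun 'I_d -> 'I_(2 * r).+1} := [ffun _ => ord0].
pose code (a : box_pat d A m) :=
  (odflt t0 [pick t | (offset t != 0) && periodic (offset t) a],
   [ffun x : {x | x \in boundary_layer} => a (val x)]).
have code_inj : {in [set a | has_small_period a] &, injective code}.
  move=> a a'; rewrite !inE => /existsP [t1 ht1] /existsP [t2 ht2] [].
  case: pickP => [t /andP [nz_t pa]|]; last by move/(_ t1); rewrite ht1.
  case: pickP => [t' /andP [_ pa'] /= tt'|]; last by move/(_ t2); rewrite ht2.
  subst t' => /ffunP e; apply: (periodic_eq_on_layer nz_t pa pa') => x x_layer.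
  by have := e (exist _ x x_layer); rewrite !ffunE.
rewrite -(card_in_imset code_inj); apply: leq_trans (max_card _) _.
by rewrite card_prod !card_ffun card_sig !card_ord.
Qed.

End Periods.

Lemma card_boundary_layer_le d m r :
  (#|boundary_layer d.+1 m r| <= d.+1 * (2 * r) * m ^ d)%N.
Proof.
have := card_boundary_layer d.+1 m r.
have m_sub : (m - 2 * r <= m <= m - 2 * r + 2 * r)%N by rewrite leq_subr /=; lia.
have := @expnS_le_add _ _ _ d m_sub.
move: (m ^ d.+1)%N ((m - 2 * r) ^ d.+1)%N => *; lia.
Qed.

Lemma card_has_small_period_le d (A : finType) r :
  exists2 M, (0 < M)%N & forall m, (0 < m)%N ->
    (2 * #|[set a : box_pat d.+1 A m | has_small_period r a]| <= M ^ (m ^ d))%N.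
Proof.
pose K := (2 * (2 * r).+1 ^ d.+1)%N; pose L := (d.+1 * (2 * r))%N.
exists (K * (#|A| + 1) ^ L)%N; first by rewrite /K !muln_gt0 !expn_gt0 addn1.
move=> m m_gt0; have md_gt0 : (0 < m ^ d)%N by rewrite expn_gt0 m_gt0.
have A_layer : (#|A| ^ #|boundary_layer d.+1 m r| <= (#|A| + 1) ^ (L * m ^ d))%N.
  apply: (@leq_trans ((#|A| + 1) ^ #|boundary_layer d.+1 m r|)).
    by case: (posnP #|boundary_layer d.+1 m r|) => [-> //| ?]; rewrite leq_exp2r // leq_addr.
  by rewrite leq_pexp2l ?addn1 // card_boundary_layer_le.
have K_le : (K <= K ^ (m ^ d))%N.
  by rewrite -{1}(expn1 K) leq_pexp2l // /K muln_gt0 expn_gt0.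
rewrite expnMn -expnM; apply: leq_trans (leq_mul K_le A_layer).
by rewrite /K -mulnA leq_mul2l card_has_small_period.
Qed.

Section LimInf.
Local Set Implicit Arguments. Local Unset Strict Implicit.
Local Open Scope classical_set_scope.
Variable R : realType.
Implicit Types u v w : R^o^nat.

Lemma limn_inf_eq_cvg0 u v : bounded_fun u -> (v - u) @ \oo --> (0 : R^o) ->
  limn_inf v = limn_inf u.
Proof.
move=> bu cvg_vu.
have bvu : bounded_fun (v - u) := cvg_seq_bounded (cvgP _ cvg_vu).
have inf_vu : limn_inf (v - u) = 0 by have [] := cvg_limn_inf_sup cvg_vu.
have inf_uv : limn_inf (- (v - u)) = 0.
  by have [] := cvg_limn_inf_sup (cvgN cvg_vu); rewrite oppr0.
have vE : v = u \+ (v - u) by apply/funext => n /=; rewrite addrC subrK.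
have uE : u = v \+ - (v - u) by apply/funext => n /=; rewrite opprB addrC subrK.
have bv : bounded_fun v by rewrite vE; exact: bounded_funD.
apply/eqP; rewrite eq_le; apply/andP; split.
- by have := le_limn_infD bv (bounded_funN bvu); rewrite -uE inf_uv addr0.
- by have := le_limn_infD bu bvu; rewrite -vE inf_vu addr0.
Qed.

Lemma limn_inf_gt u c : bounded_fun u -> c < limn_inf u ->
  exists N, forall n, (N <= n)%N -> c < u n.
Proof.
move=> bu; rewrite limn_infE // => /sup_gt [|_ [N _ <-] c_lt]; first by exists (infs u 0), 0%N.
exists N => n Nn; apply: lt_le_trans c_lt _; apply: ge_inf; last by exists n.
exact/has_lbound_sdrop/bounded_fun_has_lbound.
Qed.

Lemma cvg0_le_div w (K : R) N : (forall n, (N <= n)%N -> `|w n| <= K / n%:R) ->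
  w @ \oo --> (0 : R^o).
Proof.
move=> w_le; apply/cvgrPdist_lt => e e_gt0.
exists (maxn N.+1 (Num.truncn (K / e)).+1) => // n /=; rewrite geq_max => /andP [Nn Kn].
rewrite sub0r normrN; apply: le_lt_trans (w_le n (ltnW Nn)) _.
rewrite ltr_pdivrMr ?ltr0n ?(leq_trans _ Nn) // mulrC -ltr_pdivrMr //.
by apply: lt_le_trans (truncnS_gt _) _; rewrite ler_nat.
Qed.

End LimInf.

Section Entropy.
Local Set Implicit Arguments. Local Unset Strict Implicit.
Local Open Scope classical_set_scope.
Variables (R : realType) (A : finType).

Definition log_density d m (S : {set box_pat d A m}) : R :=
  ln (#|S|%:R) / ((m ^ d)%N%:R).

Lemma log_density_bounds d m (S : {set box_pat d A m}) :
  0 <= log_density S <= ln ((#|A| + 1)%N%:R : R).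
Proof.
have lnA_ge0 : 0 <= ln ((#|A| + 1)%N%:R : R) by rewrite ln_ge0 // ler1n addn1.
have S_le : (#|S| <= (#|A| + 1) ^ (m ^ d))%N.
  apply: leq_trans (max_card _) _; rewrite !card_ffun !card_ord.
  by case: (posnP (m ^ d)%N) => [-> //|?]; rewrite leq_exp2r // leq_addr.
rewrite /log_density; case: (posnP #|S|) => [->|S_gt0]; first by rewrite ln0 // mul0r lexx.
case: (posnP (m ^ d)%N) => [->|md_gt0]; first by rewrite invr0 mulr0 lexx.
rewrite divr_ge0 ?ln_ge0 ?ler1n //= ler_pdivrMr ?ltr0n //.
apply: (@le_trans _ _ (ln (((#|A| + 1) ^ (m ^ d))%N%:R : R))).
  by rewrite ler_ln ?ler_nat // posrE ltr0n // expn_gt0 addn1.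
by rewrite natrX lnXn ?ltr0n ?addn1 // mulr_natr.
Qed.

Lemma log_density_seq_bounded d (m : nat -> nat) (C : forall n, {set box_pat d A (m n)}) :
  bounded_fun (fun n => log_density (C n)).
Proof.
exists (ln ((#|A| + 1)%N%:R : R)); split; first exact: num_real.
move=> M /ltW M_ge n _ /=; apply: le_trans M_ge.
by have /andP [ge0 le] := log_density_bounds (C n); rewrite ger0_norm.
Qed.

Lemma log_density_le_double d m (S S' : {set box_pat d A m}) :
  S' \subset S -> (#|S| <= 2 * #|S'|)%N ->
  `|log_density S' - log_density S| <= ln 2 / (m ^ d)%N%:R.
Proof.
move=> sub le_double; have le_card := subset_leq_card sub.
rewrite /log_density -mulrBl normrM (@ger0_norm _ (_^-1)) ?invr_ge0 ?ler0n //.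
apply: ler_wpM2r; first by rewrite invr_ge0 ler0n.
case: (posnP #|S'|) => [S'0|S'_gt0].
  have -> : #|S| = 0%N by lia.
  by rewrite S'0 subrr normr0 ln_ge0 ?ler1n.
rewrite ler0_norm ?subr_le0 ?ler_ln ?posrE ?ltr0n ?ler_nat //; last by lia.
have S_gt0 : (0 < #|S|)%N by lia.
rewrite opprB lerBlDr -lnM ?posrE ?ltr0n // -natrM.
by rewrite ler_ln ?posrE ?ltr0n ?muln_gt0 // ler_nat.
Qed.

Lemma entropyE d k (C : forall n, {set box_pat d A (n * k)}) :
  entropy R C = limn_inf (fun n => log_density (C n)).
Proof. by []. Qed.

Lemma entropy_mul0 d (C : forall n, {set box_pat d.+1 A (n * 0)}) : entropy R C = 0.
Proof.
rewrite entropyE; have -> : (fun n => log_density (C n)) = fun=> 0.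
  apply/funext => n; rewrite /log_density.
  have -> : ((n * 0) ^ d.+1 = 0)%N by rewrite muln0 exp0n.
  by rewrite invr0 mulr0.
by have [] := cvg_limn_inf_sup (cvg_cst (0 : R^o) : (fun=> 0) @ \oo --> (0 : R^o)).
Qed.

Lemma entropy_eq_of_card_le_double d k (C C' : forall n, {set box_pat d.+1 A (n * k.+1)}) :
  (forall n, C' n \subset C n) ->
  (exists N, forall n, (N <= n)%N -> (#|C n| <= 2 * #|C' n|)%N) ->
  entropy R C' = entropy R C.
Proof.
move=> sub [N le_double]; rewrite !entropyE.
apply: limn_inf_eq_cvg0; first exact: log_density_seq_bounded.
apply: (@cvg0_le_div _ _ (ln 2) N.+1) => n Nn.
apply: le_trans (log_density_le_double (sub n) (le_double n (ltnW Nn))) _.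
rewrite ler_wpM2l ?ln_ge0 ?ler1n // lef_pV2 ?posrE ?ltr0n ?expn_gt0 ?muln_gt0 ?(leq_trans _ Nn) //.
have nk_gt0 : (0 < n * k.+1)%N by rewrite muln_gt0 (leq_trans _ Nn).
rewrite ler_nat; apply: leq_trans (leq_pmulr n (ltn0Sn k)) _.
by rewrite -{1}(expn1 (n * k.+1)) leq_pexp2l.
Qed.

Lemma entropy_gt0_card_ge d k (C : forall n, {set box_pat d.+1 A (n * k.+1)}) M :
  (0 < M)%N -> 0 < entropy R C ->
  exists N, forall n, (N <= n)%N -> (M ^ ((n * k.+1) ^ d) <= #|C n|)%N.
Proof.
move=> M_gt0 h_gt0; pose c := entropy R C / 2.
have c_gt0 : 0 < c by rewrite divr_gt0.
have [N0 c_lt] : exists N, forall n, (N <= n)%N -> c < log_density (C n).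
  apply: limn_inf_gt; first exact: log_density_seq_bounded.
  by rewrite -entropyE /c ltr_pdivrMr // ltr_pMr // ltr1n.
exists (maxn N0 (Num.truncn (ln M%:R / c)).+1) => n; rewrite geq_max => /andP [N0n N1n].
have n_le : (n <= n * k.+1)%N by rewrite leq_pmulr.
have m_gt0 : (0 < n * k.+1)%N by apply: leq_trans n_le; apply: leq_trans N1n.
have lnM_lt : ln M%:R < c * (n * k.+1)%N%:R.
  rewrite mulrC -ltr_pdivrMr //; apply: lt_le_trans (truncnS_gt _) _.
  by rewrite ler_nat (leq_trans N1n).
have dens := c_lt n N0n; rewrite /log_density ltr_pdivlMr ?ltr0n ?expn_gt0 ?m_gt0 // in dens.
have C_gt0 : (0 < #|C n|)%N.
  rewrite lt0n; apply/eqP => C0; move: dens; rewrite C0 ln0 // ltNge mulr_ge0 //.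
  exact: ltW.
rewrite -(ler_nat R) -ler_ln ?posrE ?ltr0n ?expn_gt0 ?M_gt0 // natrX lnXn ?ltr0n //.
apply: ltW; apply: le_lt_trans dens.
by rewrite -[ln _ *+ _]mulr_natr expnS natrM mulrA ler_wpM2r // ltW.
Qed.

End Entropy.

Theorem lemma8p2 (R : realType) (d : nat) (A : finType) (X : config d A -> Prop)
  (k : nat) (C : forall n : nat, {set box_pat d A (n * k)})
  (hX : shift_space X)
  (hC : forall n (a : box_pat d A (n * k)), a \in C n -> in_lang X a)
  (hpos : 0 < entropy R C) (r : nat) :
  exists C' : forall n : nat, {set box_pat d A (n * k)},
    (forall n, C' n \subset C n) /\
    entropy R C' = entropy R C /\
    (forall n (a : box_pat d A (n * k)) (g : site d),
        a \in C' n -> g != 0 -> (forall i, `|g 0 i| <= r%:Z) ->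
        clash (ext a) (shift_pat g (ext a))).
Proof.
case: d X C hX hC hpos => [|d] _ C _ _ hpos.
  exists C; split=> //; split=> // n a g _ /eqP g_neq0.
  by exfalso; apply: g_neq0; apply/matrixP => ? [].
case: k C hpos => [|k] C hpos; first by rewrite entropy_mul0 ltxx in hpos.
pose B n := [set a : box_pat d.+1 A (n * k.+1) | has_small_period r a].
exists (fun n => C n :\: B n).
split; first by move=> n; exact: subsetDl.
split.
  apply: entropy_eq_of_card_le_double => [n|]; first exact: subsetDl.
  have [M M_gt0 small_le] := card_has_small_period_le d A r.
  have [N C_ge] := entropy_gt0_card_ge M_gt0 hpos.
  exists N.+1 => n Nn; have nk_gt0 : (0 < n * k.+1)%N by rewrite muln_gt0 (leq_trans _ Nn).
  have := leq_trans (small_le _ nk_gt0) (C_ge n (ltnW Nn)).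
  have := subset_leq_card (subsetIr (C n) (B n)).
  by rewrite cardsD; move: #|C n| #|C n :&: B n| #|B n| => c i b; lia.
move=> n a g /setDP [_]; rewrite inE => /existsPn aperiodic g_neq0 g_le.
have [t tg] := offset_onto g_le; subst g; apply: clash_of_not_periodic.
by move: (aperiodic t); rewrite g_neq0.
Qed.
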